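(* For $n\ge 2$, let $X = (x_1,\dots,x_n)$ with $x_i\ge 0$ for $i=1,\dots,n$, and let $\alpha = (\alpha_1,\dots,\alpha_n)$ satisfy $\alpha_i > 0$ and $\sum_{i=1}^n \alpha_i = 1$. Then for all $r\in (0,1]$ and all $s\in [1,\infty)$, $$\frac{1}{1-\alpha_{\min}}\operatorname{Var}_\alpha(X^{r/2})^{1/r} \le E_\alpha X - \Pi_\alpha X \le \frac{1}{\alpha_{\min}} \operatorname{Var}_\alpha(X^{s/2})^{1/s}.$$
   Context: Notation: for a vector $Y=(y_1,\dots,y_n)$ and weights $\alpha=(\alpha_1,\dots,\alpha_n)$ with $\alpha_i>0$, $\sum_i\alpha_i=1$, the weighted arithmetic mean is $E_\alpha(Y) := \sum_{i=1}^n \alpha_i y_i$, the weighted geometric mean is $\Pi_\alpha(Y) := \prod_{i=1}^n y_i^{\alpha_i}$, and the weighted variance is $\operatorname{Var}_\alpha(Y) = \sum_{i=1}^n \alpha_i \left(y_i - \sum_{k=1}^n \alpha_k y_k\right)^2 = \sum_{i=1}^n \alpha_i y_i^2 - \left(\sum_{k=1}^n \alpha_k y_k\right)^2$. Powers of vectors are taken coordinatewise, e.g. $X^{r/2} = (x_1^{r/2},\dots,x_n^{r/2})$. $\alpha_{\min}$ denotes the minimum of $\alpha_1,\dots,\alpha_n$. *)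

From HB Require Import structures.
From mathcomp Require Import all_boot all_order all_algebra.
From mathcomp Require Import all_classical all_reals.
From mathcomp Require Import exp.
Set Implicit Arguments. Unset Strict Implicit. Unset Printing Implicit Defensive.
Import Order.TTheory GRing.Theory Num.Theory.
Local Open Scope ring_scope.

Section Means.
Variables (R : realType) (n : nat).

Definition wmean (alpha Y : 'I_n -> R) : R := \sum_(i < n) alpha i * Y i.

Definition wgeom (alpha Y : 'I_n -> R) : R := \prod_(i < n) (Y i `^ alpha i).

Definition wvar (alpha Y : 'I_n -> R) : R :=
  \sum_(i < n) alpha i * (Y i - wmean alpha Y) ^+ 2.

Definition vpow (Y : 'I_n -> R) (p : R) : 'I_n -> R := fun i => Y i `^ p.

(* alpha_min: minimum of alpha_1..alpha_n.  The neutral element 1 is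
   irrelevant when n >= 1 and all alpha_i <= 1 (as under sum alpha = 1). *)
Definition alpha_min (alpha : 'I_n -> R) : R := \big[Num.min/1]_(i < n) alpha i.

End Means.

(* Write [u = x ^ (1/2)], so that [E X - Pi X = E (u^2) - (Pi u)^2] and
   [Var u = E (u^2) - (E u)^2].  With [a = alpha_min], the case [r = s = 1]
   amounts to
     [(1 - a) (Pi u)^2 <= (E u)^2 - a E (u^2)]  and
     [(E u)^2 <= a (Pi u)^2 + (1 - a) E (u^2)].
   The first is Jensen's inequality for [expR] over pairs [(i, j)], weighted by
   the (nonnegative) coefficients of the quadratic form [(E u)^2 - a E (u^2)];
   the second is proved by induction on [n], adding one point at a time.
   General [r] and [s] follow from [Var Y = 1/2 sum_(i,j) alpha_i alpha_j (y_i - y_j)^2],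
   the bound [|u^r - v^r| <= |u - v|^r] for [r <= 1] (reversed for [s >= 1]),
   and the power mean inequality for the weights [alpha_i alpha_j / 2]. *)

From HB Require Import structures.
From mathcomp Require Import all_boot all_order all_algebra.
From mathcomp Require Import all_classical all_reals.
From mathcomp Require Import sequences exp.
From mathcomp Require Import ring lra.
Import Order.TTheory GRing.Theory Num.Theory.
Local Open Scope ring_scope.

Set Implicit Arguments.
Unset Strict Implicit.
Unset Printing Implicit Defensive.

Section ExpConvexity.
Variable R : realType.

Lemma expR_tangent (m x : R) : expR m * (1 + (x - m)) <= expR x.
Proof.
have -> : expR x = expR m * expR (x - m) by rewrite -expRD addrC subrK.
by rewrite ler_pM2l ?expR_gt0 // expR_ge1Dx.
Qed.

Lemma expR_jensen (I : finType) (w y : I -> R) :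
  (forall i, 0 <= w i) -> \sum_i w i = 1 ->
  expR (\sum_i w i * y i) <= \sum_i w i * expR (y i).
Proof.
move=> w0 w1; set m := \sum_i w i * y i.
have tangent : \sum_i w i * (expR m * (1 + (y i - m))) <= \sum_i w i * expR (y i).
  by apply: ler_sum => i _; rewrite ler_wpM2l // expR_tangent.
suff <- : \sum_i w i * (expR m * (1 + (y i - m))) = expR m by [].
have -> : \sum_i w i * (expR m * (1 + (y i - m))) =
   \sum_i (expR m * w i + expR m * (w i * y i) - expR m * m * w i).
  by apply: eq_bigr => i _; ring.
by rewrite sumrB big_split /= -!mulr_sumr w1 -/m; ring.
Qed.

Lemma expR_jensen3 (t g d x y z : R) :
  0 <= t -> 0 <= g -> 0 <= d -> t + g + d = 1 ->
  expR (t * x + g * y + d * z) <= t * expR x + g * expR y + d * expR z.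
Proof.
move=> t0 g0 d0 tgd1.
pose w := fun i : 'I_3 => [:: t; g; d]`_i.
pose v := fun i : 'I_3 => [:: x; y; z]`_i.
have := @expR_jensen _ w v.
rewrite !big_ord_recl /w /v /= !big_ord0 !addr0 !addrA.
by apply=> // -[[|[|[|]]]].
Qed.

Lemma powR_le_affine (r x : R) : 0 <= r -> r <= 1 -> 0 <= x ->
  x `^ r <= r * x + (1 - r).
Proof.
move=> r0 r1; rewrite le_eqVlt => /predU1P[<-|x0].
  have [->|rn0] := eqVneq r 0; first by rewrite powRr0; lra.
  by rewrite powR0 //; lra.
rewrite /powR gt_eqF //.
have r1' : 0 <= 1 - r by lra.
have tot : r + (1 - r) + 0 = 1 by lra.
have := @expR_jensen3 r (1 - r) 0 (ln x) 0 0 r0 r1' (lexx 0) tot.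
by rewrite !mulr0 !addr0 expR0 mul0r addr0 mulr1 lnK ?posrE // mulrC.
Qed.

End ExpConvexity.

Section PowerInequalities.
Variable R : realType.
Implicit Types (r s u v : R).

Lemma powR_subadd u v r : 0 <= v -> v <= u -> 0 < r -> r <= 1 ->
  u `^ r <= v `^ r + (u - v) `^ r.
Proof.
move=> v0 vu r0 r1.
have [u0|un0] := eqVneq u 0.
  have -> : v = 0 by lra.
  by rewrite u0 subr0 powR0 ?gt_eqF // addr0.
have up : 0 < u by rewrite lt_neqAle eq_sym un0 /=; lra.
have le_powR01 p : 0 <= p -> p <= 1 -> p <= p `^ r.
  move=> p0 p1; have [->|pn0] := eqVneq p 0; first by rewrite powR0 ?gt_eqF.
  by rewrite ger1_powR // lt_neqAle eq_sym pn0 p0.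
set p := v / u; set q := (u - v) / u.
have p0 : 0 <= p by rewrite divr_ge0 //; lra.
have q0 : 0 <= q by rewrite divr_ge0 //; lra.
have p1 : p <= 1 by rewrite ler_pdivrMr // mul1r.
have q1 : q <= 1 by rewrite ler_pdivrMr // mul1r; lra.
have pq : p + q = 1 by rewrite /p /q; field; exact: lt0r_neq0.
have ev : v = u * p by rewrite /p; field; exact: lt0r_neq0.
have euv : u - v = u * q by rewrite /q; field; exact: lt0r_neq0.
rewrite euv ev (powRM _ (ltW up) p0) (powRM _ (ltW up) q0) -mulrDr.
have hp := le_powR01 _ p0 p1; have hq := le_powR01 _ q0 q1.
have : u `^ r * (p + q) <= u `^ r * (p `^ r + q `^ r).
  by rewrite ler_wpM2l ?powR_ge0 //; lra.
by rewrite pq mulr1.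
Qed.

Lemma sqr_powRB_le u v r : 0 <= u -> 0 <= v -> 0 < r -> r <= 1 ->
  (u `^ r - v `^ r) ^+ 2 <= ((u - v) ^+ 2) `^ r.
Proof.
move=> u0 v0 r0 r1.
wlog vu : u v u0 v0 / v <= u.
  move=> H; have [|uv] := lerP v u; first exact: H.
  rewrite -sqrrN opprB -[(u - v) ^+ 2]sqrrN opprB.
  by apply: H => //; exact: ltW.
have sub := powR_subadd v0 vu r0 r1.
have h0 : 0 <= u `^ r - v `^ r.
  by rewrite subr_ge0; apply: ge0_ler_powR; rewrite ?nnegrE // ltW.
have -> : ((u - v) ^+ 2) `^ r = ((u - v) `^ r) ^+ 2.
  by rewrite !expr2 powRM // subr_ge0.
by rewrite ler_sqr ?nnegrE ?powR_ge0 //; lra.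
Qed.

Lemma sqr_powRB_ge u v s : 0 <= u -> 0 <= v -> 1 <= s ->
  ((u - v) ^+ 2) `^ s <= (u `^ s - v `^ s) ^+ 2.
Proof.
move=> u0 v0 s1.
have s0 : 0 < s by lra.
have si0 : 0 < s^-1 by rewrite invr_gt0.
have si1 : s^-1 <= 1 by rewrite invf_le1.
have h := sqr_powRB_le (powR_ge0 u s) (powR_ge0 v s) si0 si1.
rewrite -!powRrM !mulfV ?gt_eqF // !powRr1 // in h.
have := @ge0_ler_powR _ s (ltW s0) ((u - v) ^+ 2) _ _ _ h.
rewrite -powRrM mulVf ?gt_eqF // powRr1 ?sqr_ge0 //; apply.
all: by rewrite nnegrE ?sqr_ge0 ?powR_ge0.
Qed.

Lemma wsum_powR_le (I : finType) (w e : I -> R) r : 0 < r -> r <= 1 ->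
  (forall i, 0 <= w i) -> \sum_i w i <= 1 -> (forall i, 0 <= e i) ->
  \sum_i w i * e i `^ r <= (\sum_i w i * e i) `^ r.
Proof.
move=> r0 r1 w0 w1 e0; set E := \sum_i w i * e i.
have [E0|En0] := eqVneq E 0.
  have we0 := psumr_eq0P (fun i _ => mulr_ge0 (w0 i) (e0 i)) E0.
  rewrite big1 ?powR_ge0 // => i _.
  have /eqP := we0 i isT; rewrite mulf_eq0 => /orP[/eqP ->|/eqP ->].
    by rewrite mul0r.
  by rewrite powR0 ?mulr0 // gt_eqF.
have Ep : 0 < E by rewrite lt_neqAle eq_sym En0 sumr_ge0 // => i _; rewrite mulr_ge0.
(* tangent line of the concave map t |-> t ^ r at E *)
have step i : w i * e i `^ r <= E `^ r * (r * (w i * e i) / E + (1 - r) * w i).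
  have -> : e i = E * (e i / E) by field; exact: lt0r_neq0.
  rewrite (powRM _ (ltW Ep) (divr_ge0 (e0 i) (ltW Ep))).
  have := powR_le_affine (ltW r0) r1 (divr_ge0 (e0 i) (ltW Ep)).
  have := powR_ge0 E r.
  have -> : E `^ r * (r * (w i * (E * (e i / E))) / E + (1 - r) * w i) =
      w i * (E `^ r * (r * (e i / E) + (1 - r))) by field; exact: lt0r_neq0.
  by move=> Er h; rewrite ler_wpM2l // ler_wpM2l.
apply: le_trans (ler_sum _ (fun i _ => step i)) _.
rewrite -mulr_sumr big_split /= -mulr_suml -mulr_sumr -mulr_sumr -/E.
have -> : r * E / E = r by field; exact: lt0r_neq0.
rewrite -[X in _ <= X]mulr1 ler_wpM2l ?powR_ge0 //.
have : (1 - r) * \sum_i w i <= (1 - r) * 1 by rewrite ler_wpM2l //; lra.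
lra.
Qed.

Lemma wsum_powR_ge (I : finType) (w e : I -> R) s : 1 <= s ->
  (forall i, 0 <= w i) -> \sum_i w i <= 1 -> (forall i, 0 <= e i) ->
  \sum_i w i * e i <= (\sum_i w i * e i `^ s) `^ s^-1.
Proof.
move=> s1 w0 w1 e0; have s0 : 0 < s by lra.
have si0 : 0 < s^-1 by rewrite invr_gt0.
have si1 : s^-1 <= 1 by rewrite invf_le1.
have := wsum_powR_le si0 si1 w0 w1 (fun i => powR_ge0 (e i) s).
suff -> : \sum_i w i * (e i `^ s) `^ s^-1 = \sum_i w i * e i by [].
by apply: eq_bigr => i _; rewrite -powRrM mulfV ?gt_eqF // powRr1.
Qed.

End PowerInequalities.

Section WeightedVariance.
Variable R : realType.

Lemma sum_pair_sqrB (I : finType) (w v : I -> R) :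
  \sum_i \sum_j w i * w j * (v i - v j) ^+ 2 =
  2 * ((\sum_i w i) * (\sum_i w i * v i ^+ 2) - (\sum_i w i * v i) ^+ 2).
Proof.
have -> : \sum_i \sum_j w i * w j * (v i - v j) ^+ 2 =
    \sum_i ((w i * v i ^+ 2) * \sum_j w j + (\sum_j w j * v j ^+ 2) * w i
            - (2 * (w i * v i)) * \sum_j (w j * v j)).
  apply: eq_bigr => i _; rewrite !mulr_sumr mulr_suml -big_split -sumrB /=.
  by apply: eq_bigr => j _; ring.
by rewrite sumrB big_split /= -!mulr_suml -!mulr_sumr; ring.
Qed.

Lemma wcauchy_schwarz (I : finType) (w v : I -> R) : (forall i, 0 <= w i) ->
  (\sum_i w i * v i) ^+ 2 <= (\sum_i w i) * (\sum_i w i * v i ^+ 2).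
Proof.
move=> w0.
have : 0 <= \sum_i \sum_j w i * w j * (v i - v j) ^+ 2.
  apply: sumr_ge0 => i _; apply: sumr_ge0 => j _.
  by apply: mulr_ge0; [apply: mulr_ge0|apply: sqr_ge0].
by rewrite sum_pair_sqrB pmulr_rge0 // subr_ge0.
Qed.

Variables (n : nat) (alpha : 'I_n -> R).
Hypothesis alpha1 : \sum_i alpha i = 1.

Lemma wvarE y : wvar alpha y = \sum_i alpha i * y i ^+ 2 - wmean alpha y ^+ 2.
Proof.
rewrite /wvar; set m := wmean alpha y.
have -> : \sum_i alpha i * (y i - m) ^+ 2 =
    \sum_i (alpha i * y i ^+ 2 - 2 * m * (alpha i * y i) + m ^+ 2 * alpha i).
  by apply: eq_bigr => i _; ring.
by rewrite big_split sumrB /= -!mulr_sumr alpha1 -/(wmean alpha y) -/m; ring.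
Qed.

Lemma wvar_pairE y : wvar alpha y =
  \sum_(p : 'I_n * 'I_n) alpha p.1 * alpha p.2 / 2 * (y p.1 - y p.2) ^+ 2.
Proof.
rewrite wvarE -(pair_bigA _ (fun i j => alpha i * alpha j / 2 * (y i - y j) ^+ 2)) /=.
have -> : \sum_i \sum_j alpha i * alpha j / 2 * (y i - y j) ^+ 2 =
    (\sum_i \sum_j alpha i * alpha j * (y i - y j) ^+ 2) / 2.
  rewrite mulr_suml; apply: eq_bigr => i _; rewrite mulr_suml.
  by apply: eq_bigr => j _; rewrite mulrAC.
by rewrite sum_pair_sqrB alpha1 /wmean mul1r mulrAC divff ?mul1r ?pnatr_eq0.
Qed.

Lemma sum_pair_weights :
  \sum_(p : 'I_n * 'I_n) alpha p.1 * alpha p.2 / 2 = 2^-1.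
Proof.
rewrite -(pair_bigA _ (fun i j => alpha i * alpha j / 2)) /=.
have -> : \sum_i \sum_j alpha i * alpha j / 2 = \sum_i (alpha i / 2) * \sum_j alpha j.
  by apply: eq_bigr => i _; rewrite mulr_sumr; apply: eq_bigr => j _; rewrite mulrAC.
by rewrite alpha1 -mulr_suml -mulr_suml alpha1 mulr1 mul1r.
Qed.

Hypothesis alpha_ge0 : forall i, 0 <= alpha i.

Lemma wvar_ge0 y : 0 <= wvar alpha y.
Proof. by apply: sumr_ge0 => i _; rewrite mulr_ge0 ?sqr_ge0. Qed.

Let pair_weight_ge0 (p : 'I_n * 'I_n) : 0 <= alpha p.1 * alpha p.2 / 2.
Proof. by rewrite !mulr_ge0 ?invr_ge0 ?ler0n. Qed.

Let pair_weights_le1 : \sum_(p : 'I_n * 'I_n) alpha p.1 * alpha p.2 / 2 <= 1.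
Proof. by rewrite sum_pair_weights invf_le1 ?ler1n. Qed.

Lemma wvar_powR_le (u : 'I_n -> R) (r : R) : (forall i, 0 <= u i) -> 0 < r -> r <= 1 ->
  wvar alpha (fun i => u i `^ r) `^ r^-1 <= wvar alpha u.
Proof.
move=> u0 r0 r1.
have le_powr : wvar alpha (fun i => u i `^ r) <= wvar alpha u `^ r.
  rewrite !wvar_pairE; apply: le_trans (wsum_powR_le r0 r1 pair_weight_ge0
    pair_weights_le1 (fun p => sqr_ge0 (u p.1 - u p.2))).
  by apply: ler_sum => p _; rewrite ler_wpM2l ?sqr_powRB_le.
rewrite -[X in _ <= X](powRr1 (wvar_ge0 u)) -(mulfV (lt0r_neq0 r0)) powRrM.
apply: ge0_ler_powR => //; rewrite ?nnegrE ?invr_ge0.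
- exact: ltW.
- exact: wvar_ge0.
- exact: powR_ge0.
Qed.

Lemma wvar_powR_ge (u : 'I_n -> R) (s : R) : (forall i, 0 <= u i) -> 1 <= s ->
  wvar alpha u <= wvar alpha (fun i => u i `^ s) `^ s^-1.
Proof.
move=> u0 s1; have s0 : 0 < s by lra.
rewrite !wvar_pairE; apply: le_trans (wsum_powR_ge s1 pair_weight_ge0
  pair_weights_le1 (fun p => sqr_ge0 (u p.1 - u p.2))) _.
apply: ge0_ler_powR; rewrite ?nnegrE ?invr_ge0.
- exact: ltW.
- by apply: sumr_ge0 => p _; rewrite mulr_ge0 ?pair_weight_ge0 ?powR_ge0.
- by apply: sumr_ge0 => p _; rewrite mulr_ge0 ?pair_weight_ge0 ?sqr_ge0.
- by apply: ler_sum => p _; rewrite ler_wpM2l ?pair_weight_ge0 ?sqr_powRB_ge.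
Qed.

End WeightedVariance.

Section GeometricMeanFacts.
Variable R : realType.
Variables (n : nat) (alpha : 'I_n -> R).
Hypothesis alpha_gt0 : forall i, 0 < alpha i.

Lemma prod_powR_eq0 (u : 'I_n -> R) k : u k = 0 -> \prod_i u i `^ alpha i = 0.
Proof. by move=> uk; rewrite (bigD1 k) //= uk powR0 ?mul0r ?lt0r_neq0. Qed.

Lemma prod_powR_expR (u : 'I_n -> R) : (forall i, 0 < u i) ->
  \prod_i u i `^ alpha i = expR (\sum_i alpha i * ln (u i)).
Proof.
by move=> u0; rewrite expR_sum; apply: eq_bigr => i _; rewrite /powR gt_eqF // mulrC.
Qed.

End GeometricMeanFacts.

Section LowerBound.
Variable R : realType.
Variables (n : nat) (alpha : 'I_n -> R) (a : R).
Hypothesis alpha1 : \sum_i alpha i = 1.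

(* [mix_coef i j] are the coefficients of the quadratic form
   [(\sum_i alpha i * u i) ^+ 2 - a * \sum_i alpha i * u i ^+ 2]; they are
   nonnegative as soon as [a <= alpha i] and add up to [1 - a]. *)
Definition mix_coef (i j : 'I_n) : R :=
  alpha i * alpha j - (if i == j then a * alpha i else 0).

Lemma mix_coef_sumr (i : 'I_n) (f : 'I_n -> R) :
  \sum_j mix_coef i j * f j = alpha i * \sum_j alpha j * f j - a * alpha i * f i.
Proof.
have -> : \sum_j mix_coef i j * f j =
    \sum_j (alpha i * (alpha j * f j) - (if i == j then a * alpha i else 0) * f j).
  by apply: eq_bigr => j _; rewrite /mix_coef; ring.
rewrite sumrB -mulr_sumr; congr (_ - _).
rewrite (bigD1 i) //= eqxx big1 ?addr0 // => j ji.
by rewrite eq_sym (negbTE ji) mul0r.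
Qed.

Lemma mix_coef_total : \sum_i \sum_j mix_coef i j = 1 - a.
Proof.
have -> : \sum_i \sum_j mix_coef i j = \sum_i (alpha i * \sum_j alpha j * 1 - a * alpha i * 1).
  by apply: eq_bigr => i _; rewrite -mix_coef_sumr; apply: eq_bigr => j _; rewrite mulr1.
have e1 : \sum_j alpha j * 1 = 1 by under eq_bigr do rewrite mulr1.
rewrite e1; under eq_bigr do rewrite !mulr1.
by rewrite sumrB -mulr_sumr alpha1 mulr1.
Qed.

Lemma mix_coef_quad (u : 'I_n -> R) :
  \sum_i \sum_j mix_coef i j * (u i * u j) =
  (\sum_i alpha i * u i) ^+ 2 - a * \sum_i alpha i * u i ^+ 2.
Proof.
have -> : \sum_i \sum_j mix_coef i j * (u i * u j) =
    \sum_i u i * (alpha i * \sum_j alpha j * u j - a * alpha i * u i).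
  apply: eq_bigr => i _; rewrite -mix_coef_sumr mulr_sumr.
  by apply: eq_bigr => j _; ring.
by rewrite expr2 mulr_suml mulr_sumr -sumrB; apply: eq_bigr => i _; ring.
Qed.

Lemma mix_coef_lin (y : 'I_n -> R) :
  \sum_i \sum_j mix_coef i j * (y i + y j) = 2 * (1 - a) * \sum_i alpha i * y i.
Proof.
have -> : \sum_i \sum_j mix_coef i j * (y i + y j) =
    \sum_i (y i * (alpha i * \sum_j alpha j * 1 - a * alpha i * 1) +
            (alpha i * \sum_j alpha j * y j - a * alpha i * y i)).
  apply: eq_bigr => i _; rewrite -!mix_coef_sumr mulr_sumr -big_split /=.
  by apply: eq_bigr => j _; ring.
have e1 : \sum_j alpha j * 1 = 1 by under eq_bigr do rewrite mulr1.
rewrite e1; under eq_bigr do rewrite !mulr1.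
set T := \sum_j alpha j * y j.
have -> : \sum_i (y i * (alpha i - a * alpha i) + (alpha i * T - a * alpha i * y i)) =
    \sum_i ((1 - 2 * a) * (alpha i * y i) + T * alpha i) by apply: eq_bigr => i _; ring.
by rewrite big_split /= -!mulr_sumr alpha1 -/T; ring.
Qed.

Hypothesis alpha_gt0 : forall i, 0 < alpha i.
Hypothesis a_lt1 : a < 1.
Hypothesis a_le_alpha : forall i, a <= alpha i.

Lemma mix_coef_ge0 i j : 0 <= mix_coef i j.
Proof.
have al0 := ltW (alpha_gt0 _).
rewrite /mix_coef; case: eqP => [<-|_]; last by rewrite subr0 mulr_ge0.
by rewrite -mulrBl mulr_ge0 // subr_ge0.
Qed.

(* Jensen's inequality for [expR] at the points [ln (u i) + ln (u j)], with
   the weights [mix_coef i j / (1 - a)]. *)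
Lemma sqr_prod_powR_le_mix (u : 'I_n -> R) : (forall i, 0 <= u i) ->
  (1 - a) * (\prod_i u i `^ alpha i) ^+ 2 <=
  (\sum_i alpha i * u i) ^+ 2 - a * \sum_i alpha i * u i ^+ 2.
Proof.
move=> u0; rewrite -mix_coef_quad.
case: (boolP [exists k, u k == 0]) => [/existsP[k /eqP uk]|/existsPn u_neq0].
  rewrite (prod_powR_eq0 alpha_gt0 uk) expr0n /= mulr0.
  apply: sumr_ge0 => i _; apply: sumr_ge0 => j _.
  by rewrite mulr_ge0 ?mix_coef_ge0 ?mulr_ge0.
have u_gt0 i : 0 < u i by rewrite lt_neqAle eq_sym u_neq0 u0.
have a1 : 0 < 1 - a by rewrite subr_gt0.
pose w (p : 'I_n * 'I_n) := mix_coef p.1 p.2 / (1 - a).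
pose y (p : 'I_n * 'I_n) := ln (u p.1) + ln (u p.2).
have divr_dsum (F : 'I_n -> 'I_n -> R) :
    \sum_i \sum_j F i j / (1 - a) = (\sum_i \sum_j F i j) / (1 - a).
  by rewrite mulr_suml; apply: eq_bigr => i _; rewrite mulr_suml.
have w0 p : 0 <= w p by rewrite divr_ge0 ?mix_coef_ge0 ?ltW.
have w1 : \sum_p w p = 1.
  rewrite -(pair_bigA _ (fun i j => mix_coef i j / (1 - a))) /=.
  by rewrite divr_dsum mix_coef_total divff ?lt0r_neq0.
have wy : \sum_p w p * y p = 2 * \sum_i alpha i * ln (u i).
  rewrite -(pair_bigA _ (fun i j => mix_coef i j / (1 - a) * (ln (u i) + ln (u j)))) /=.
  under eq_bigr do under eq_bigr do rewrite mulrAC.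
  by rewrite divr_dsum mix_coef_lin; field; rewrite lt0r_neq0.
have wexpy : \sum_p w p * expR (y p) =
    (\sum_i \sum_j mix_coef i j * (u i * u j)) / (1 - a).
  rewrite -divr_dsum (pair_bigA _ (fun i j => mix_coef i j * (u i * u j) / (1 - a))) /=.
  by apply: eq_bigr => p _; rewrite /w /y expRD !lnK ?posrE // mulrAC.
have := expR_jensen y w0 w1.
by rewrite wy wexpy expRM_natl -prod_powR_expR // ler_pdivlMr // mulrC.
Qed.

End LowerBound.

Section UpperBound.
Variable R : realType.

(* [(1 - a) <= rho ^ (1 - 2 b)] with [rho = (s - a) / s]: trivial when
   [1 - 2 b <= 0], and otherwise Bernoulli's inequality for [rho ^ -(1 - 2 b)]. *)
Lemma ln_onem_le (a b s : R) : 0 < a -> a <= b -> a < s -> b + s = 1 ->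
  ln (1 - a) <= (1 - 2 * b) * ln ((s - a) / s).
Proof.
move=> a0 ab a_lt_s bs.
have s0 : 0 < s by lra.
have sa : 0 < s - a by lra.
have a1 : 0 < 1 - a by lra.
have rho0 : 0 < (s - a) / s by rewrite divr_gt0.
have rho1 : (s - a) / s <= 1 by rewrite ler_pdivrMr //; lra.
have lnr : ln ((s - a) / s) <= 0 by rewrite ln_le0.
have lna : ln (1 - a) <= 0 by rewrite ln_le0 //; lra.
have [p_le0|p_gt0] := lerP (1 - 2 * b) 0.
  have : 0 <= (1 - 2 * b) * ln ((s - a) / s) by rewrite mulr_le0.
  lra.
set p := 1 - 2 * b in p_gt0 *; set rho := (s - a) / s in rho0 rho1 lnr *.
have p1 : p <= 1 by rewrite /p; lra.
have := powR_le_affine (ltW p_gt0) p1 (_ : 0 <= rho^-1).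
rewrite invr_ge0 ltW // /powR invr_eq0 gt_eqF // lnV ?posrE // => bernoulli.
rewrite -ler_expR lnK ?posrE //.
have -> : expR (p * ln rho) = (expR (p * - ln rho))^-1 by rewrite mulrN expRN invrK.
rewrite -[X in _ <= X]div1r ler_pdivlMr ?expR_gt0 //.
apply: le_trans (_ : (1 - a) * (p * rho^-1 + (1 - p)) <= 1).
  by rewrite ler_wpM2l; lra.
have -> : (1 - a) * (p * rho^-1 + (1 - p)) =
    (1 - a) * (p * s + (1 - p) * (s - a)) / (s - a).
  by rewrite /rho invf_div; field; rewrite gt_eqF.
rewrite ler_pdivrMr // mul1r /p.
have -> : b = 1 - s by lra.
have : 0 <= a * (1 - s) * (1 - 2 * a) by rewrite !mulr_ge0 //; lra.
have : s - a - (1 - a) * ((1 - 2 * (1 - s)) * s + (1 - (1 - 2 * (1 - s))) * (s - a))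
  = a * (1 - s) * (1 - 2 * a) by ring.
lra.
Qed.

(* The two-point case: Jensen's inequality for [expR] at [2 (s L + b y)],
   [2 y] and [2 L], with weights whose barycentre is [y + L]. *)
Lemma two_point_sqr_mean_le (a b s y L : R) :
  0 < a -> a <= b -> a <= s -> b + s = 1 ->
  (b * expR y + s * expR L) ^+ 2 <=
  a * expR (s * L + b * y) ^+ 2 + (1 - a) * (b * expR y ^+ 2 + s * expR L ^+ 2).
Proof.
move=> a0 ab a_le_s bs.
have b0 : 0 < b by lra.
have s0 : 0 < 1 - b by lra.
have {bs}es : s = 1 - b by lra.
subst s.
pose t := a / (2 * b * (1 - b)); pose g := (1 - b - a) / (2 * (1 - b)).
pose d := (b - a) / (2 * b).
have t0 : 0 <= t by rewrite divr_ge0 // ?mulr_ge0; lra.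
have g0 : 0 <= g by rewrite divr_ge0 //; lra.
have d0 : 0 <= d by rewrite divr_ge0 //; lra.
have tgd1 : t + g + d = 1 by rewrite /t /g /d; field; rewrite !gt_eqF.
have := expR_jensen3 (2 * ((1 - b) * L + b * y)) (2 * y) (2 * L) t0 g0 d0 tgd1.
have -> : t * (2 * ((1 - b) * L + b * y)) + g * (2 * y) + d * (2 * L) = y + L.
  by rewrite /t /g /d; field; rewrite !gt_eqF.
have -> : t * expR (2 * ((1 - b) * L + b * y)) + g * expR (2 * y) + d * expR (2 * L) =
    (a * expR ((1 - b) * L + b * y) ^+ 2 + b * (1 - b - a) * expR y ^+ 2 +
     (1 - b) * (b - a) * expR L ^+ 2) / (2 * b * (1 - b)).
  by rewrite /t /g /d !expRM_natl; field; rewrite !gt_eqF.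
rewrite expRD => jensen; rewrite ler_pdivlMr ?mulr_gt0 // in jensen.
set G := expR (_ * L + b * y) in jensen *.
set u := expR y in jensen *; set H := expR L in jensen *.
have : a * G ^+ 2 + (1 - a) * (b * u ^+ 2 + (1 - b) * H ^+ 2) - (b * u + (1 - b) * H) ^+ 2
  = a * G ^+ 2 + b * (1 - b - a) * u ^+ 2 + (1 - b) * (b - a) * H ^+ 2
    - u * H * (2 * b * (1 - b)) by ring.
lra.
Qed.

Lemma two_point_geom_ge (a b s y L : R) : 0 < a -> a <= b -> a <= s -> b + s = 1 ->
  s * expR L <= (s - a) * expR y ->
  s * (1 - a) * expR L ^+ 2 <= (s - a) * expR (s * L + b * y) ^+ 2.
Proof.
move=> a0 ab a_le_s bs hyp.
have s0 : 0 < s by lra.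
have b0 : 0 < b by lra.
have a_lt_s : a < s.
  rewrite lt_neqAle a_le_s andbT; apply: contraTneq hyp => ->.
  by rewrite subrr mul0r -ltNge mulr_gt0 ?expR_gt0.
have sa : 0 < s - a by lra.
have a1 : 0 < 1 - a by lra.
have hyp_ln : ln s + L <= ln (s - a) + y.
  by move: hyp; rewrite -ler_ln ?posrE ?mulr_gt0 ?expR_gt0 // !lnM ?posrE ?expR_gt0 // !expRK.
have := ln_onem_le a0 ab a_lt_s bs; rewrite ln_div ?posrE // => onem_le.
rewrite -ler_ln ?posrE ?mulr_gt0 ?exprn_gt0 ?expR_gt0 //.
have pos (x : R) : 0 < x -> x \in Num.pos by rewrite posrE.
rewrite (lnM (pos _ (mulr_gt0 s0 a1)) (pos _ (exprn_gt0 2 (expR_gt0 L)))).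
rewrite (lnM (pos _ sa) (pos _ (exprn_gt0 2 (expR_gt0 _)))) (lnM (pos _ s0) (pos _ a1)).
rewrite !lnXn ?expR_gt0 // !expRK !mulr2n.
have : b * L <= b * (ln (s - a) - ln s + y) by rewrite ler_wpM2l //; lra.
have -> : s = 1 - b by lra.
move: onem_le; have -> : s = 1 - b by lra.
set X := ln (1 - b - a); set Y := ln (1 - b).
nra.
Qed.

(* One induction step: a group of total weight [s], with arithmetic mean [M],
   geometric mean [H] and mean square [Q], is merged with a point [u] of
   weight [b]; [g] is the geometric mean of the merged family.  With
   [D = s - a], [D] times the gap to prove equals
   [b (s M - D u)^2 + a (D g^2 - (1 - a) s H^2) + (1 - a) s (D Q - s M^2 + a H^2)],
   whose last term is nonnegative by the induction hypothesis [ih] and whose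
   first two are handled by [two_point] or [geom_ge] according to the sign
   of [s H - D u]. *)
Lemma sqr_mean_merge_le (a b s u H M Q g : R) :
  0 < a -> a <= b -> a <= s -> b + s = 1 ->
  0 < u -> 0 < H -> H <= M -> M ^+ 2 <= Q ->
  s * M ^+ 2 <= a * H ^+ 2 + (s - a) * Q ->
  (b * u + s * H) ^+ 2 <= a * g ^+ 2 + (1 - a) * (b * u ^+ 2 + s * H ^+ 2) ->
  (s * H <= (s - a) * u -> s * (1 - a) * H ^+ 2 <= (s - a) * g ^+ 2) ->
  (s * M + b * u) ^+ 2 <= a * g ^+ 2 + (1 - a) * (s * Q + b * u ^+ 2).
Proof.
move=> a0 ab a_le_s bs u0 H0 HM MQ ih two_point geom_ge.
have s0 : 0 < s by lra.
have b0 : 0 < b by lra.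
have [sa|sa] := eqVneq (s - a) 0.
  have MH : M = H.
    have : M ^+ 2 <= H ^+ 2.
      by rewrite sa mul0r addr0 (_ : a = s) ?ler_pM2l // in ih; lra.
    by rewrite ler_sqr ?nnegrE; lra.
  subst M.
  have : (1 - a) * (s * H ^+ 2) <= (1 - a) * (s * Q) by rewrite !ler_wpM2l //; lra.
  lra.
have D0 : 0 < s - a by rewrite lt_neqAle eq_sym sa /=; lra.
set D := s - a in ih geom_ge D0 *.
have first_terms : 0 <= b * (s * M - D * u) ^+ 2 + a * (D * g ^+ 2 - (1 - a) * s * H ^+ 2).
  have [hc|hc] := lerP (s * H) (D * u).
    have := geom_ge hc.
    have : 0 <= b * (s * M - D * u) ^+ 2 by rewrite mulr_ge0 ?sqr_ge0; lra.
    nra.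
  have : (s * H - D * u) ^+ 2 <= (s * M - D * u) ^+ 2.
    by rewrite ler_sqr ?nnegrE; nra.
  have : D * (b * u + s * H) ^+ 2 <= D * (a * g ^+ 2 + (1 - a) * (b * u ^+ 2 + s * H ^+ 2)).
    by rewrite ler_wpM2l //; lra.
  have : b * (s * H - D * u) ^+ 2 + a * (D * g ^+ 2 - (1 - a) * s * H ^+ 2) =
      D * (a * g ^+ 2 + (1 - a) * (b * u ^+ 2 + s * H ^+ 2)) - D * (b * u + s * H) ^+ 2.
    by rewrite /D (_ : b = 1 - s); [ring | lra].
  nra.
have : D * (a * g ^+ 2 + (1 - a) * (s * Q + b * u ^+ 2)) - D * (s * M + b * u) ^+ 2
    = b * (s * M - D * u) ^+ 2 + a * (D * g ^+ 2 - (1 - a) * s * H ^+ 2)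
      + (1 - a) * s * (D * Q - (s * M ^+ 2 - a * H ^+ 2)).
  by rewrite /D (_ : b = 1 - s); [ring | lra].
have : 0 <= (1 - a) * s * (D * Q - (s * M ^+ 2 - a * H ^+ 2)).
  by rewrite mulr_ge0 ?mulr_ge0 //; lra.
move=> last_term gap_eq.
have : 0 <= D * (a * g ^+ 2 + (1 - a) * (s * Q + b * u ^+ 2) - (s * M + b * u) ^+ 2).
  by rewrite mulrBr; lra.
by rewrite pmulr_rge0 // subr_ge0.
Qed.

(* By induction on [n]: the last point is merged with the renormalized family
   of the others, to which the induction hypothesis applies with bound [a / s]. *)
Lemma sqr_wmean_expR_le_mix n (alpha y : 'I_n.+1 -> R) (a : R) :
  (forall i, 0 < alpha i) -> \sum_i alpha i = 1 -> 0 < a ->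
  (forall i, a <= alpha i) ->
  (\sum_i alpha i * expR (y i)) ^+ 2 <=
  a * expR (\sum_i alpha i * y i) ^+ 2 + (1 - a) * \sum_i alpha i * expR (y i) ^+ 2.
Proof.
elim: n alpha y a => [|n IH] alpha y a alpha_gt0 alpha1 a0 a_le.
  move: alpha1; rewrite !big_ord1 => ->; rewrite !mul1r.
  by rewrite -mulrDl subrKC mul1r.
pose lw := @widen_ord n.+1 n.+2 (leqnSn n.+1).
move: alpha1; rewrite !(big_ord_recr n.+1) /= => alpha1.
set b := alpha ord_max in alpha1 *.
set s := \sum_(i < n.+1) alpha (lw i) in alpha1 *.
have a_le_s : a <= s.
  apply: le_trans (a_le (lw ord0)) _.
  by rewrite /s (bigD1 ord0) //= lerDl; apply: sumr_ge0 => i _; exact: ltW.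
have s0 : 0 < s by apply: lt_le_trans a0 a_le_s.
have sn0 : s != 0 by rewrite gt_eqF.
pose beta i := alpha (lw i) / s.
have beta_gt0 i : 0 < beta i by rewrite divr_gt0.
have beta1 : \sum_i beta i = 1 by rewrite -mulr_suml divff.
have a_le_beta i : a / s <= beta i by rewrite ler_pM2r ?invr_gt0.
have := IH beta (y \o lw) (a / s) beta_gt0 beta1 (divr_gt0 a0 s0) a_le_beta.
set M := \sum_i beta i * expR ((y \o lw) i).
set L := \sum_i beta i * (y \o lw) i.
set Q := \sum_i beta i * expR ((y \o lw) i) ^+ 2 => ih.
have scale (f : 'I_n.+2 -> R) :
    \sum_(i < n.+1) alpha (lw i) * f (lw i) = s * \sum_i beta i * f (lw i).
  by rewrite mulr_sumr; apply: eq_bigr => i _; rewrite /beta; field.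
rewrite (scale (expR \o y)) (scale y) (scale (fun i => expR (y i) ^+ 2)) -/M -/L -/Q.
have HM : expR L <= M by apply: expR_jensen => // i; exact: ltW.
have MQ : M ^+ 2 <= Q.
  by have := wcauchy_schwarz (expR \o y \o lw) (fun i => ltW (beta_gt0 i)); rewrite beta1 mul1r.
have ih_s : s * M ^+ 2 <= a * expR L ^+ 2 + (s - a) * Q.
  have -> : a * expR L ^+ 2 + (s - a) * Q = s * (a / s * expR L ^+ 2 + (1 - a / s) * Q).
    by field.
  by rewrite ler_pM2l.
have bs : b + s = 1 by lra.
have a_le_b : a <= b by exact: a_le.
apply: (sqr_mean_merge_le a0 a_le_b a_le_s bs (expR_gt0 _) (expR_gt0 _) HM MQ ih_s).
  exact: two_point_sqr_mean_le.
exact: two_point_geom_ge.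
Qed.

Lemma sqr_wmean_le_mix n (alpha u : 'I_n -> R) (a : R) :
  (forall i, 0 < alpha i) -> \sum_i alpha i = 1 -> (forall i, 0 <= u i) ->
  0 < a -> (forall i, a <= alpha i) ->
  (\sum_i alpha i * u i) ^+ 2 <=
  a * (\prod_i u i `^ alpha i) ^+ 2 + (1 - a) * \sum_i alpha i * u i ^+ 2.
Proof.
case: n alpha u => [|n] alpha u alpha_gt0 alpha1 u0 a0 a_le.
  by move: alpha1; rewrite big_ord0 => /eqP; rewrite eq_sym oner_eq0.
case: (boolP [exists k, u k == 0]) => [/existsP[k /eqP uk]|/existsPn u_neq0].
  (* the geometric mean vanishes: drop the point [k] and use Cauchy-Schwarz *)
  rewrite (prod_powR_eq0 alpha_gt0 uk) expr0n /= mulr0 add0r.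
  pose w i := if i == k then 0 else alpha i.
  have w0 i : 0 <= w i by rewrite /w; case: eqP => // _; exact: ltW.
  have wu (f : R -> R) : f 0 = 0 -> \sum_i w i * f (u i) = \sum_i alpha i * f (u i).
    by move=> f0; apply: eq_bigr => i _; rewrite /w; case: eqP => [->|//]; rewrite uk f0 !mulr0.
  have w1 : \sum_i w i = 1 - alpha k.
    rewrite -alpha1 (bigD1 k) //= [X in _ = X - _](bigD1 k) //= /w eqxx add0r addrC addrK.
    by apply: eq_bigr => i /negbTE ->.
  have := wcauchy_schwarz u w0.
  rewrite (wu id) // (wu (fun v => v ^+ 2)) ?expr0n // w1 => /le_trans; apply.
  rewrite ler_wpM2r ?lerD2l ?lerN2 //.
  by apply: sumr_ge0 => i _; rewrite mulr_ge0 ?sqr_ge0 // ltW.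
have u_gt0 i : 0 < u i by rewrite lt_neqAle eq_sym u_neq0 u0.
have uE i : u i = expR (ln (u i)) by rewrite lnK // posrE.
rewrite prod_powR_expR //.
under eq_bigr do rewrite uE.
under [X in _ <= _ + (1 - a) * X]eq_bigr do rewrite uE.
exact: sqr_wmean_expR_le_mix.
Qed.

End UpperBound.

Section AMGMGap.
Variable R : realType.
Variables (n : nat) (x alpha : 'I_n -> R) (a : R).
Hypothesis x_ge0 : forall i, 0 <= x i.
Hypothesis alpha_gt0 : forall i, 0 < alpha i.
Hypothesis alpha1 : \sum_i alpha i = 1.
Hypothesis a_le_alpha : forall i, a <= alpha i.

Lemma vpow_half (p : R) : vpow x (p / 2) = fun i => vpow x 2^-1 i `^ p.
Proof. by apply/funext => i; rewrite /vpow -powRrM mulrC. Qed.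

Let sqrt_sqr i : vpow x 2^-1 i ^+ 2 = x i.
Proof.
by rewrite -powR_mulrn ?powR_ge0 // -powRrM mulVf ?pnatr_eq0 // powRr1.
Qed.

Let wmean_sqrt : wmean alpha x = \sum_i alpha i * vpow x 2^-1 i ^+ 2.
Proof. by apply: eq_bigr => i _; rewrite sqrt_sqr. Qed.

Let wgeom_sqrt : wgeom alpha x = (\prod_i vpow x 2^-1 i `^ alpha i) ^+ 2.
Proof.
rewrite /wgeom -prodrXl; apply: eq_bigr => i _.
by rewrite -{1}sqrt_sqr expr2 powRM ?powR_ge0 // -expr2.
Qed.

Lemma wvar_sqrt_le_gap : a < 1 ->
  wvar alpha (vpow x 2^-1) <= (1 - a) * (wmean alpha x - wgeom alpha x).
Proof.
move=> a1; have := sqr_prod_powR_le_mix alpha1 alpha_gt0 a1 a_le_alpha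
  (fun i => powR_ge0 (x i) 2^-1).
by rewrite wvarE // wmean_sqrt wgeom_sqrt /wmean; lra.
Qed.

Lemma gap_le_wvar_sqrt : 0 < a ->
  a * (wmean alpha x - wgeom alpha x) <= wvar alpha (vpow x 2^-1).
Proof.
move=> a0; have := sqr_wmean_le_mix alpha_gt0 alpha1
  (fun i => powR_ge0 (x i) 2^-1) a0 a_le_alpha.
by rewrite wvarE // wmean_sqrt wgeom_sqrt /wmean; lra.
Qed.

End AMGMGap.

Section AlphaMin.
Variable R : realType.
Variables (n : nat) (alpha : 'I_n -> R).

Lemma alpha_min_le i : alpha_min alpha <= alpha i.
Proof. by rewrite /alpha_min (bigD1 i) //= ge_min lexx. Qed.

Lemma alpha_min_gt0 : (forall i, 0 < alpha i) -> 0 < alpha_min alpha.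
Proof.
move=> alpha_gt0; rewrite /alpha_min.
by apply: (big_ind (fun v => 0 < v)) => // p q p0 q0; rewrite lt_min p0 q0.
Qed.

Lemma alpha_min_lt1 : (1 < n)%N -> (forall i, 0 < alpha i) ->
  \sum_i alpha i = 1 -> alpha_min alpha < 1.
Proof.
move=> n2 alpha_gt0 alpha1.
pose i0 : 'I_n := Ordinal (ltnW n2); pose i1 : 'I_n := Ordinal n2.
have : alpha i0 + alpha i1 <= 1.
  rewrite -alpha1 (bigD1 i0) //= (bigD1 i1) //= addrA lerDl.
  by apply: sumr_ge0 => i _; exact: ltW.
by have := alpha_gt0 i1; have := alpha_min_le i0; lra.
Qed.

End AlphaMin.

Unset Implicit Arguments.

Theorem theorem2p4 (R : realType) (n : nat) (x alpha : 'I_n -> R) (r s : R) :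
  (2 <= n)%N ->
  (forall i, 0 <= x i) ->
  (forall i, 0 < alpha i) ->
  \sum_(i < n) alpha i = 1 ->
  0 < r -> r <= 1 -> 1 <= s ->
  (1 / (1 - alpha_min alpha)) * (wvar alpha (vpow x (r / 2)) `^ (1 / r))
    <= wmean alpha x - wgeom alpha x
  /\ wmean alpha x - wgeom alpha x
    <= (1 / alpha_min alpha) * (wvar alpha (vpow x (s / 2)) `^ (1 / s)).
Proof.
move=> n2 x_ge0 alpha_gt0 alpha1 r0 r1 s1.
have alpha_ge0 i : 0 <= alpha i by exact: ltW.
have a_le := alpha_min_le alpha.
have a0 := alpha_min_gt0 alpha_gt0.
have a1 := alpha_min_lt1 n2 alpha_gt0 alpha1.
have sqrt_ge0 i : 0 <= vpow x 2^-1 i by exact: powR_ge0.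
rewrite !div1r !vpow_half; split.
- rewrite mulrC ler_pdivrMr ?subr_gt0 // mulrC.
  apply: le_trans (wvar_sqrt_le_gap x_ge0 alpha_gt0 alpha1 a_le a1).
  exact: wvar_powR_le.
- rewrite mulrC ler_pdivlMr // mulrC.
  apply: le_trans (gap_le_wvar_sqrt x_ge0 alpha_gt0 alpha1 a_le a0) _.
  exact: wvar_powR_ge.
Qed.
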